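(* Assume the standing assumptions (A1)–(A4) and let $\rho>0$. For every $\epsilon\ge 0$ and every $p\in\mathbb R^{n_p}$, $$|f(p)-f(p^* )|\le \epsilon\ \Longrightarrow\ |f_0(p)-f_0(p^* )|\le D_0\Bigl[\frac{2\epsilon}{\mu_0}\Bigr]^{1/2}+\frac{L_0}{2}\Bigl[\frac{2\epsilon}{\mu_0}\Bigr].$$
   Context: Let $n_p,n_c\ge 1$, let $f_0:\mathbb R^{n_p}\to\mathbb R$ and $c_i:\mathbb R^{n_p}\to\mathbb R$ ($i=1,\dots,n_c$) be continuously differentiable, and let $\{1,\dots,n_c\}=I_s\cup I_h$ be a partition into disjoint sets of soft and hard constraint indices. The original problem is $\min_{p\in\mathbb R^{n_p}} f_0(p)$ subject to $c_i(p)\le 0$ for all $i$; $f^{opt}$ denotes its optimal value and $p^{opt}$ an optimal solution (assumed to exist). For a fixed $\varepsilon_\psi>0$ let $\psi(p):=\sum_{i\in I_s}[\max\{0,c_i(p)\}]^2+\sum_{i\in I_h}[\max\{0,c_i(p)+\varepsilon_\psi\}]^2$, and for a penalty parameter $\rho>0$ let $f(p):=f_0(p)+\rho\,\psi(p)$. A differentiable function $\ell$ belongs to $\mathcal F^1_L$ if $\ell(p_2)\le \ell(p_1)+\langle \ell'(p_1),p_2-p_1\rangle+\frac L2\|p_2-p_1\|^2$ for all $p_1,p_2$, and is $\mu$-strongly convex if $\ell(p_2)\ge \ell(p_1)+\langle \ell'(p_1),p_2-p_1\rangle+\frac \mu2\|p_2-p_1\|^2$ for all $p_1,p_2$. Standing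 assumptions: (A1) $f_0(p)\ge 0$ for all $p$; (A2) $f_0\in\mathcal F^1_{L_0}$ and $\psi\in\mathcal F^1_{L_\psi}$ for some reals $L_0,L_\psi\ge 0$; (A3) $f_0$ is $\mu_0$-strongly convex for some $\mu_0>0$, and $\psi$ is convex; (A4) the set $\mathcal A:=\{p:\psi(p)=0\}$ is nonempty and there is $\beta>0$ with $\psi(p)\ge \beta\,[d(p,\mathcal A)]^2$ for all $p$, where $d(p,\mathcal A):=\min_{z\in\mathcal A}\|z-p\|$. Notation: $\|\cdot\|$ is the Euclidean norm; $p^*$ is the unique minimizer of $f$ over $\mathbb R^{n_p}$; $p_u$ is the unique unconstrained minimizer of $f_0$; $p_a$ is a fixed point with $\psi(p_a)=0$; $D_0:=\sup\{\|f_0'(p)\|:\ f_0(p)\le f_0(p_a)\}$; $d(p):=\|p-p^*\|$. *)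

From mathcomp Require Import ssreflect ssrfun ssrbool eqtype ssrnat seq fintype bigop.
From Stdlib Require Import Reals.
Open Scope R_scope.

Definition Vec (n : nat) := 'I_n -> R.

Definition vadd {n} (x y : Vec n) : Vec n := fun i => x i + y i.
Definition vsub {n} (x y : Vec n) : Vec n := fun i => x i - y i.
Definition vscale {n} (a : R) (x : Vec n) : Vec n := fun i => a * x i.

Definition inner {n} (x y : Vec n) : R := \big[Rplus/0]_(i < n) (x i * y i).
Definition norm {n} (x : Vec n) : R := sqrt (inner x x).

Definition has_grad {n} (l : Vec n -> R) (p g : Vec n) : Prop :=
  forall eps, 0 < eps -> exists delta, 0 < delta /\
    forall h : Vec n, norm h < delta ->
      Rabs (l (vadd p h) - l p - inner g h) <= eps * norm h.

Definition C1_with {n} (l : Vec n -> R) (l' : Vec n -> Vec n) : Prop :=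
  (forall p, has_grad l p (l' p)) /\
  (forall p eps, 0 < eps -> exists delta, 0 < delta /\
     forall q, norm (vsub q p) < delta -> norm (vsub (l' q) (l' p)) < eps).

Definition FL_with {n} (L : R) (l : Vec n -> R) (l' : Vec n -> Vec n) : Prop :=
  (forall p, has_grad l p (l' p)) /\
  forall p1 p2, l p2 <= l p1 + inner (l' p1) (vsub p2 p1)
                        + L / 2 * (norm (vsub p2 p1)) ^ 2.

Definition FL {n} (L : R) (l : Vec n -> R) : Prop :=
  exists l' : Vec n -> Vec n, FL_with L l l'.

Definition strongly_convex_with {n} (mu : R) (l : Vec n -> R) (l' : Vec n -> Vec n) : Prop :=
  (forall p, has_grad l p (l' p)) /\
  forall p1 p2, l p2 >= l p1 + inner (l' p1) (vsub p2 p1)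
                        + mu / 2 * (norm (vsub p2 p1)) ^ 2.

Definition convex {n} (l : Vec n -> R) : Prop :=
  forall (x y : Vec n) (t : R), 0 <= t <= 1 ->
    l (vadd (vscale t x) (vscale (1 - t) y)) <= t * l x + (1 - t) * l y.

Definition psi {np nc} (c : 'I_nc -> Vec np -> R) (soft : pred 'I_nc)
  (eps_psi : R) (p : Vec np) : R :=
  \big[Rplus/0]_(i < nc | soft i) (Rmax 0 (c i p)) ^ 2
  + \big[Rplus/0]_(i < nc | ~~ soft i) (Rmax 0 (c i p + eps_psi)) ^ 2.

Definition fpen {np nc} (f0 : Vec np -> R) (rho : R) (c : 'I_nc -> Vec np -> R)
  (soft : pred 'I_nc) (eps_psi : R) (p : Vec np) : R :=
  f0 p + rho * psi c soft eps_psi p.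

(* Since psi is convex, f = f0 + rho psi is mu0-strongly convex, so its minimizer
   pstar has quadratic growth: mu0/2 ||p - pstar||^2 <= f(p) - f(pstar) <= eps.
   Because psi >= 0 and psi(pa) = 0, f0(pstar) <= f(pstar) <= f(pa) = f0(pa),
   whence ||f0'(pstar)|| <= D0.  The two-sided Taylor bounds for f0 (strong
   convexity below, L0-smoothness above) and Cauchy-Schwarz then give
   |f0(p) - f0(pstar)| <= ||f0'(pstar)|| ||p - pstar|| + L0/2 ||p - pstar||^2. *)
From mathcomp Require Import ssreflect ssrfun ssrbool eqtype ssrnat seq fintype bigop.
From Stdlib Require Import Reals Lra Psatz.
Open Scope R_scope.

Lemma big_Rplus_add {I : Type} (s : seq I) (P : pred I) (F G : I -> R) :
  \big[Rplus/0]_(i <- s | P i) (F i + G i)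
    = \big[Rplus/0]_(i <- s | P i) F i + \big[Rplus/0]_(i <- s | P i) G i.
Proof.
apply: (big_rec3 (fun x y z => x = y + z)) => [|i x y z _ ->]; ring.
Qed.

Lemma big_Rplus_scale {I : Type} (s : seq I) (P : pred I) (a : R) (F : I -> R) :
  \big[Rplus/0]_(i <- s | P i) (a * F i) = a * \big[Rplus/0]_(i <- s | P i) F i.
Proof. by apply: (big_rec2 (fun x y => x = a * y)) => [|i x y _ ->]; ring. Qed.

Lemma big_Rplus_ge0 {I : Type} (s : seq I) (P : pred I) (F : I -> R) :
  (forall i, 0 <= F i) -> 0 <= \big[Rplus/0]_(i <- s | P i) F i.
Proof. by move=> H; apply: big_ind => //; [lra | move=> *; lra]. Qed.

Section Inner.
Context {n : nat}.
Implicit Types x y u w : Vec n.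

Lemma inner_self_ge0 x : 0 <= inner x x.
Proof. by apply: big_Rplus_ge0 => i; nra. Qed.

Lemma norm_ge0 x : 0 <= norm x.
Proof. exact: sqrt_pos. Qed.

Lemma norm_pow2 x : norm x ^ 2 = inner x x.
Proof. by rewrite /norm pow2_sqrt //; apply: inner_self_ge0. Qed.

Lemma inner_scale_r {g u w : Vec n} {a : R} :
  (forall i, u i = a * w i) -> inner g u = a * inner g w.
Proof.
move=> Hu; rewrite /inner -big_Rplus_scale.
by apply: eq_bigr => i _; rewrite Hu; ring.
Qed.

Lemma norm_pow2_scale {u w a} :
  (forall i, u i = a * w i) -> norm u ^ 2 = a ^ 2 * norm w ^ 2.
Proof.
move=> Hu; rewrite !norm_pow2 /inner -big_Rplus_scale.
by apply: eq_bigr => i _; rewrite Hu; ring.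
Qed.

Lemma inner_pow2_le (g w : Vec n) : inner g w ^ 2 <= inner g g * inner w w.
Proof.
set X := inner g w; set A := inner g g; set B := inner w w.
(* the quadratic t |-> ||t g + w||^2 is nonnegative *)
have quad_ge0 t : 0 <= t ^ 2 * A + (2 * t * X + B).
  have -> : t ^ 2 * A + (2 * t * X + B) =
      \big[Rplus/0]_(i < n) ((t * g i + w i) * (t * g i + w i)).
    rewrite (eq_bigr (fun i => t ^ 2 * (g i * g i) + (2 * t * (g i * w i) + w i * w i)));
      last by move=> i _; ring.
    by rewrite !big_Rplus_add !big_Rplus_scale.
  by apply: big_Rplus_ge0 => i; apply: Rle_0_sqr.
have HA : 0 <= A by apply: inner_self_ge0.
have HB : 0 <= B by apply: inner_self_ge0.
have [A0 | Apos] := Req_dec A 0.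
  have [X0 | Xn] := Req_dec X 0; first by rewrite X0 A0; nra.
  have := quad_ge0 (- (B + 1) / (2 * X)).
  rewrite A0 (_ : 2 * (- (B + 1) / (2 * X)) * X = - (B + 1)); first lra.
  by field.
have := quad_ge0 (- X / A).
rewrite (_ : (- X / A) ^ 2 * A + (2 * (- X / A) * X + B) = B - X ^ 2 / A);
  last by field.
move=> Hq; have /(Rmult_le_compat_r A _ _ HA) : X ^ 2 / A <= B by lra.
by rewrite (_ : X ^ 2 / A * A = X ^ 2); [nra | field].
Qed.

Lemma Rabs_inner_le (g w : Vec n) : Rabs (inner g w) <= norm g * norm w.
Proof.
rewrite /norm -sqrt_mult_alt; last exact: inner_self_ge0.
rewrite -sqrt_Rsqr_abs; apply: sqrt_le_1_alt.
by rewrite /Rsqr; have := inner_pow2_le g w; lra.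
Qed.

End Inner.

Lemma psi_ge0 {np nc} (c : 'I_nc -> Vec np -> R) soft eps_psi p :
  0 <= psi c soft eps_psi p.
Proof.
by apply: Rplus_le_le_0_compat; apply: big_Rplus_ge0 => i; apply: pow2_ge_0.
Qed.

Lemma convex_scale {n} (h : Vec n -> R) (a : R) :
  0 <= a -> convex h -> convex (fun q => a * h q).
Proof.
move=> Ha Hh x y t Ht; have := Rmult_le_compat_l a _ _ Ha (Hh x y t Ht); lra.
Qed.

Lemma le_of_forall_scaled (a b : R) :
  0 <= b -> (forall t, 0 < t < 1 -> (1 - t) * a <= b) -> a <= b.
Proof.
move=> Hb Hab; apply: Rnot_lt_le => Hba.
have Ha : 0 < a by lra.
have := Hab ((a - b) / (2 * a)).
rewrite (_ : (1 - (a - b) / (2 * a)) * a = (a + b) / 2); last by field; lra.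
suff Ht : 0 < (a - b) / (2 * a) < 1 by move/(_ Ht); lra.
split; first by apply: Rdiv_lt_0_compat; lra.
apply: (Rmult_lt_reg_r (2 * a)); first lra.
by rewrite (_ : (a - b) / (2 * a) * (2 * a) = a - b); [lra | field; lra].
Qed.

Section StronglyConvex.
Context {n : nat} {mu : R} {g : Vec n -> R} {g' : Vec n -> Vec n}.
Hypothesis g_sc : strongly_convex_with mu g g'.

Lemma strongly_convex_combination x y t :
  0 <= t <= 1 ->
  g (vadd (vscale t x) (vscale (1 - t) y)) + mu / 2 * (t * (1 - t)) * norm (vsub x y) ^ 2
    <= t * g x + (1 - t) * g y.
Proof.
move=> Ht; case: g_sc => _ Hsc.
set m := vadd (vscale t x) (vscale (1 - t) y).
have ex i : vsub x m i = (1 - t) * vsub x y i by rewrite /vsub /m /vadd /vscale; ring.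
have ey i : vsub y m i = - t * vsub x y i by rewrite /vsub /m /vadd /vscale; ring.
have := Hsc m x; have := Hsc m y.
rewrite (inner_scale_r ex) (norm_pow2_scale ex).
rewrite (inner_scale_r ey) (norm_pow2_scale ey).
set G := inner (g' m) (vsub x y); set D := norm (vsub x y) ^ 2.
move=> /Rge_le Hy /Rge_le Hx.
have := Rmult_le_compat_l t _ _ (proj1 Ht) Hx.
have := Rmult_le_compat_l (1 - t) _ _ (ltac:(lra) : 0 <= 1 - t) Hy.
by move=> *; nra.
Qed.

(* The argument uses only function values of h, so no gradient of h is needed. *)
Lemma quadratic_growth_at_min (h : Vec n -> R) pstar p :
  convex h -> (forall q, g pstar + h pstar <= g q + h q) ->
  mu / 2 * norm (vsub p pstar) ^ 2 <= g p + h p - (g pstar + h pstar).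
Proof.
move=> Hh Hmin; apply: le_of_forall_scaled; first by have := Hmin p; lra.
move=> t Ht; have Ht' : 0 <= t <= 1 by lra.
have Hg := strongly_convex_combination p pstar t Ht'.
have Hhm := Hh p pstar t Ht'.
have Hm := Hmin (vadd (vscale t p) (vscale (1 - t) pstar)).
apply: (Rmult_le_reg_l t); first lra.
by nra.
Qed.

Lemma Rabs_sub_le_smooth (L : R) p q :
  0 <= L -> 0 <= mu -> FL_with L g g' ->
  Rabs (g p - g q) <= norm (g' q) * norm (vsub p q) + L / 2 * norm (vsub p q) ^ 2.
Proof.
move=> HL Hmu [_ Hup]; case: g_sc => _ Hlo.
have := Hup q p; have := Hlo q p.
have Hcs := Rabs_inner_le (g' q) (vsub p q).
have := Rle_abs (inner (g' q) (vsub p q)).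
have := Rle_abs (- inner (g' q) (vsub p q)); rewrite Rabs_Ropp.
have : 0 <= L / 2 * norm (vsub p q) ^ 2 by apply: Rmult_le_pos; [lra | apply: pow2_ge_0].
have : 0 <= mu / 2 * norm (vsub p q) ^ 2 by apply: Rmult_le_pos; [lra | apply: pow2_ge_0].
by move=> *; apply: Rabs_le; lra.
Qed.

End StronglyConvex.

Theorem lemma4
  (np nc : nat) (Hnp : (1 <= np)%nat) (Hnc : (1 <= nc)%nat)
  (f0 : Vec np -> R) (f0' : Vec np -> Vec np)
  (c : 'I_nc -> Vec np -> R) (c' : 'I_nc -> Vec np -> Vec np)
  (soft : pred 'I_nc) (eps_psi rho L0 Lpsi mu0 beta D0 : R)
  (pa pstar : Vec np)
  (* smoothness of the data *)
  (Hf0C1 : C1_with f0 f0')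
  (HcC1 : forall i, C1_with (c i) (c' i))
  (Heps_psi : 0 < eps_psi)
  (* the original constrained problem has an optimal solution *)
  (Hopt : exists popt : Vec np, (forall i, c i popt <= 0) /\
            forall q : Vec np, (forall i, c i q <= 0) -> f0 popt <= f0 q)
  (* (A1) *)
  (HA1 : forall p, 0 <= f0 p)
  (* (A2) *)
  (HL0 : 0 <= L0) (HLpsi : 0 <= Lpsi)
  (HA2f0 : FL_with L0 f0 f0')
  (HA2psi : FL Lpsi (psi c soft eps_psi))
  (* (A3) *)
  (Hmu0 : 0 < mu0)
  (HA3f0 : strongly_convex_with mu0 f0 f0')
  (HA3psi : convex (psi c soft eps_psi))
  (* (A4): A = {psi = 0} nonempty, d(p,A) attained, psi p >= beta d(p,A)^2 *)
  (Hbeta : 0 < beta)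
  (HA4 : forall p : Vec np, exists z : Vec np,
      psi c soft eps_psi z = 0 /\
      (forall z', psi c soft eps_psi z' = 0 -> norm (vsub z p) <= norm (vsub z' p)) /\
      psi c soft eps_psi p >= beta * (norm (vsub z p)) ^ 2)
  (* p_a with psi(p_a) = 0 and D0 = sup { ||f0'(p)|| : f0 p <= f0 pa } *)
  (Hpa : psi c soft eps_psi pa = 0)
  (HD0 : is_lub (fun r => exists p, f0 p <= f0 pa /\ r = norm (f0' p)) D0)
  (* penalty parameter and the minimizer p* of f *)
  (Hrho : 0 < rho)
  (Hpstar : forall q, fpen f0 rho c soft eps_psi pstar <= fpen f0 rho c soft eps_psi q) :
  forall (eps : R) (p : Vec np), 0 <= eps ->
    Rabs (fpen f0 rho c soft eps_psi p - fpen f0 rho c soft eps_psi pstar) <= eps ->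
    Rabs (f0 p - f0 pstar) <= D0 * sqrt (2 * eps / mu0) + L0 / 2 * (2 * eps / mu0).
Proof.
move=> eps p Heps /(Rle_trans _ _ _ (Rle_abs _)) Hgap.
have Hpen_cvx : convex (fun q => rho * psi c soft eps_psi q).
  by apply: convex_scale; [lra | exact: HA3psi].
have Hgrowth := quadratic_growth_at_min HA3f0 _ _ p Hpen_cvx Hpstar.
have Hdist2 : norm (vsub p pstar) ^ 2 <= 2 * eps / mu0.
  apply: (Rmult_le_reg_r mu0) => //.
  rewrite (_ : 2 * eps / mu0 * mu0 = 2 * eps); last by field; lra.
  by rewrite /fpen in Hgap; lra.
have Hdist : norm (vsub p pstar) <= sqrt (2 * eps / mu0).
  by rewrite -(sqrt_pow2 _ (norm_ge0 _)); apply: sqrt_le_1_alt.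
have Hgrad : norm (f0' pstar) <= D0.
  case: HD0 => Hub _; apply: Hub; exists pstar; split => //.
  have := Hpstar pa; have := psi_ge0 c soft eps_psi pstar.
  by rewrite /fpen Hpa; nra.
apply: Rle_trans (Rabs_sub_le_smooth HA3f0 L0 p pstar HL0 (Rlt_le _ _ Hmu0) HA2f0) _.
apply: Rplus_le_compat.
- by apply: Rmult_le_compat => //; apply: norm_ge0.
- by apply: Rmult_le_compat_l; lra.
Qed.
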